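(* Let $0<\delta<\frac12$, $n\ge1$, let $\mathbf{y}=(y_1,\dots,y_{n-1})\in D_n$ and $\varphi=(\varphi_1,\dots,\varphi_n)\in E_\delta^n$. Then there is a unique $\mathbf{x}=(x_1,\dots,x_{n-1})\in D_n$ for which there exists a function $\bar\varphi\in E_\delta$ whose restriction to $[x_{i-1},x_i]$ equals $(\varphi_i;[x_{i-1},x_i],[y_{i-1},y_i])$ for each $i$ with $1\le i\le n$ (with the conventions $x_0=y_0=0$, $x_n=y_n=1$).
   Context: $I=[0,1]$. $E_\delta=\mathrm{Diff}_+^{1,\delta}(I)$ is the set of $C^1$ diffeomorphisms $f$ of $I$ fixing $0$ and $1$ whose derivative $f'$ is Hölder continuous of exponent $\delta$; $E_\delta^n$ is its $n$-fold Cartesian product. $D_n=\{(x_1,\dots,x_{n-1}):0<x_1<\cdots<x_{n-1}<1\}$. For $\varphi\in E_\delta$ and closed intervals $J,K\subset\mathbb{R}$ with nonempty interior, where $J$ has left endpoint $x$ and length $j$ and $K$ has left endpoint $y$ and length $k$, the affine distortion $(\varphi;J,K):J\to K$ is $t\mapsto y+k\,\varphi\!\left(\frac{t-x}{j}\right)$. *)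

From Stdlib Require Import Reals Lra Lia Arith.
Open Scope R_scope.

Definition inI (x : R) : Prop := 0 <= x <= 1.

Definition deriv_on_I (f d : R -> R) : Prop :=
  forall x, inI x -> forall eps, 0 < eps -> exists del, 0 < del /\
    forall y, inI y -> y <> x -> Rabs (y - x) < del ->
      Rabs ((f y - f x) / (y - x) - d x) < eps.

Definition cont_on_I (g : R -> R) : Prop :=
  forall x, inI x -> forall eps, 0 < eps -> exists del, 0 < del /\
    forall y, inI y -> Rabs (y - x) < del -> Rabs (g y - g x) < eps.

Definition C1_on_I (f : R -> R) : Prop :=
  exists d, deriv_on_I f d /\ cont_on_I d.

(* C^1 diffeomorphism of I fixing 0 and 1 (hence orientation preserving):
   f maps I to I bijectively, with C^1 inverse g. *)
Definition Diff1_plus (f : R -> R) : Prop :=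
  f 0 = 0 /\ f 1 = 1 /\ C1_on_I f /\
  exists g : R -> R,
    (forall x, inI x -> inI (f x) /\ g (f x) = x) /\
    (forall y, inI y -> inI (g y) /\ f (g y) = y) /\
    C1_on_I g.

Definition E_delta (delta : R) (f : R -> R) : Prop :=
  Diff1_plus f /\
  exists d, deriv_on_I f d /\
    exists C : R, forall x y, inI x -> inI y -> x <> y ->
      Rabs (d x - d y) <= C * Rpower (Rabs (x - y)) delta.

(* A point (x_1,...,x_{n-1}) is encoded by x : nat -> R (only indices
   1..n-1 matter); ext n x adds the conventions x_0 = 0, x_n = 1. *)
Definition ext (n : nat) (x : nat -> R) (i : nat) : R :=
  if Nat.eqb i 0 then 0 else if Nat.eqb i n then 1 else x i.

Definition inD (n : nat) (x : nat -> R) : Prop :=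
  forall i, (i < n)%nat -> ext n x i < ext n x (S i).

(* Affine distortion (phi; J, K) with J = [xl, xl + j], K = [yl, yl + k]. *)
Definition aff_dist (phi : R -> R) (xl j yl k : R) (t : R) : R :=
  yl + k * phi ((t - xl) / j).

Definition glues (n : nat) (phi : nat -> R -> R) (x y : nat -> R)
  (phibar : R -> R) : Prop :=
  forall i, (1 <= i <= n)%nat ->
    forall t, ext n x (i - 1) <= t <= ext n x i ->
      phibar t = aff_dist (phi i) (ext n x (i - 1)) (ext n x i - ext n x (i - 1))
                          (ext n y (i - 1)) (ext n y i - ext n y (i - 1)) t.

(* Gluing affine copies of [phi_i] along [x] gives a C^1 map exactly when the one-sided
   derivatives agree at every node:
     (y_i - y_(i-1)) / (x_i - x_(i-1)) * phi_i'(1) = (y_(i+1) - y_i) / (x_(i+1) - x_i) * phi_(i+1)'(0).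
   As [phi_i'(0)] and [phi_i'(1)] are positive, this prescribes the ratio of each length
   [x_(i+1) - x_i] to the previous one, and the normalisation [x_n = 1] then determines [x].
   Conversely, for these lengths the glued map is a C^1 diffeomorphism: its inverse glues
   the inverse pieces, whose slopes at the nodes are the reciprocals; and its derivative,
   being delta-Hoelder on each of the finitely many pieces, is delta-Hoelder on [I]. *)

From Stdlib Require Import Reals Lra Lia Arith IndefiniteDescription.
Open Scope R_scope.

(** * Limits relative to an interval *)

Definition near_within (a b : R) (P : R -> R -> R -> Prop) : Prop :=
  forall x, a <= x <= b -> forall eps, 0 < eps -> exists del, 0 < del /\
    forall y, a <= y <= b -> Rabs (y - x) < del -> P eps x y.

Definition deriv_within (a b : R) (f d : R -> R) : Prop :=
  near_within a b (fun eps x y => y <> x -> Rabs ((f y - f x) / (y - x) - d x) < eps).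

Definition cont_within (a b : R) (g : R -> R) : Prop :=
  near_within a b (fun eps x y => Rabs (g y - g x) < eps).

Lemma deriv_on_I_within (f d : R -> R) : deriv_on_I f d <-> deriv_within 0 1 f d.
Proof.
  split; intros H x Hx eps Heps; destruct (H x Hx eps Heps) as [del [Hdel Hy]];
    exists del; split; auto.
Qed.

Lemma cont_on_I_within (g : R -> R) : cont_on_I g <-> cont_within 0 1 g.
Proof.
  split; intros H x Hx eps Heps; destruct (H x Hx eps Heps) as [del [Hdel Hy]];
    exists del; split; auto.
Qed.

Lemma near_within_impl_scaled (a b K : R) (P Q : R -> R -> R -> Prop) : 0 < K ->
  (forall eps x y, 0 < eps -> a <= x <= b -> a <= y <= b -> P (eps / K) x y -> Q eps x y) ->
  near_within a b P -> near_within a b Q.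
Proof.
  intros HK HPQ HP x Hx eps Heps.
  assert (HeK : 0 < eps / K) by (apply Rdiv_lt_0_compat; assumption).
  destruct (HP x Hx (eps / K) HeK) as [del [Hdel Hy]].
  exists del; split; auto.
Qed.

Lemma near_within_impl (a b : R) (P Q : R -> R -> R -> Prop) :
  (forall eps x y, a <= x <= b -> a <= y <= b -> P eps x y -> Q eps x y) ->
  near_within a b P -> near_within a b Q.
Proof.
  intros HPQ. apply near_within_impl_scaled with (K := 1); [lra|].
  intros eps x y _ Hx Hy. rewrite Rdiv_1_r. auto.
Qed.

Lemma near_within_sub (a b a' b' : R) (P : R -> R -> R -> Prop) :
  a <= a' -> b' <= b -> near_within a b P -> near_within a' b' P.
Proof.
  intros Ha Hb HP x Hx eps Heps.
  destruct (HP x ltac:(lra) eps Heps) as [del [Hdel Hy]].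
  exists del; split; auto. intros y Hy'. apply Hy. lra.
Qed.

(* No order between a, b, c is needed: a point of [a,c] lies on one side of b. *)
Lemma near_within_concat (a b c : R) (P : R -> R -> R -> Prop) :
  near_within a b P -> near_within b c P -> near_within a c P.
Proof.
  intros H1 H2 x Hx eps Heps.
  destruct (Rtotal_order x b) as [Hxb | [Hxb | Hxb]].
  - destruct (H1 x ltac:(lra) eps Heps) as [del [Hdel Hy]].
    exists (Rmin del (b - x)); split; [apply Rmin_glb_lt; lra|].
    intros y Hy' Hyx. pose proof (Rmin_l del (b - x)). pose proof (Rmin_r del (b - x)).
    apply Rabs_def2 in Hyx. apply Hy; [lra|]. apply Rabs_def1; lra.
  - subst x.
    destruct (H1 b ltac:(lra) eps Heps) as [del1 [Hdel1 Hy1]].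
    destruct (H2 b ltac:(lra) eps Heps) as [del2 [Hdel2 Hy2]].
    exists (Rmin del1 del2); split; [apply Rmin_glb_lt; lra|].
    intros y Hy Hyx. pose proof (Rmin_l del1 del2). pose proof (Rmin_r del1 del2).
    destruct (Rle_or_lt y b); [apply Hy1 | apply Hy2]; lra.
  - destruct (H2 x ltac:(lra) eps Heps) as [del [Hdel Hy]].
    exists (Rmin del (x - b)); split; [apply Rmin_glb_lt; lra|].
    intros y Hy' Hyx. pose proof (Rmin_l del (x - b)). pose proof (Rmin_r del (x - b)).
    apply Rabs_def2 in Hyx. apply Hy; [lra|]. apply Rabs_def1; lra.
Qed.

Lemma affine_unit_interval (a a' t : R) : a < a' -> a <= t <= a' ->
  0 <= (t - a) / (a' - a) <= 1.
Proof.
  intros Ha Ht. assert (Hinv : 0 < / (a' - a)) by (apply Rinv_0_lt_compat; lra).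
  unfold Rdiv. split.
  - apply Rmult_le_pos; lra.
  - rewrite <- (Rinv_r (a' - a)) by lra. apply Rmult_le_compat_r; lra.
Qed.

Lemma Rabs_affine_diff (a j x y : R) : 0 < j ->
  Rabs ((y - a) / j - (x - a) / j) = Rabs (y - x) / j.
Proof.
  intros Hj. replace ((y - a) / j - (x - a) / j) with ((y - x) * / j) by (field; lra).
  rewrite Rabs_mult, Rabs_inv, (Rabs_right j) by lra. reflexivity.
Qed.

Lemma near_within_affine (a a' : R) (P : R -> R -> R -> Prop) : a < a' ->
  near_within 0 1 P ->
  near_within a a' (fun eps x y => P eps ((x - a) / (a' - a)) ((y - a) / (a' - a))).
Proof.
  intros Ha HP x Hx eps Heps.
  destruct (HP _ (affine_unit_interval a a' x Ha Hx) eps Heps) as [del [Hdel Hy]].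
  exists (del * (a' - a)); split; [apply Rmult_lt_0_compat; lra|].
  intros y Hy' Hyx. apply Hy; [apply affine_unit_interval; auto|].
  rewrite Rabs_affine_diff by lra.
  apply Rmult_lt_reg_r with (a' - a); [lra|]. unfold Rdiv. rewrite Rmult_assoc, Rinv_l; lra.
Qed.

Lemma exists_near_point (a b x del : R) : a < b -> a <= x <= b -> 0 < del ->
  exists y, a <= y <= b /\ y <> x /\ Rabs (y - x) < del.
Proof.
  intros Hab Hx Hdel. set (h := Rmin del (b - a) / 2).
  assert (Hh : 0 < h /\ 2 * h <= del /\ 2 * h <= b - a).
  { pose proof (Rmin_l del (b - a)). pose proof (Rmin_r del (b - a)).
    assert (0 < Rmin del (b - a)) by (apply Rmin_glb_lt; lra). unfold h. lra. }
  destruct (Rle_or_lt (x + h) b).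
  - exists (x + h). repeat split; try lra. rewrite Rabs_right; lra.
  - exists (x - h). repeat split; try lra. rewrite Rabs_left; lra.
Qed.

Lemma eq0_of_Rabs_le_eps (z K : R) : (forall e, 0 < e -> Rabs z <= e * K) -> z = 0.
Proof.
  intros H. destruct (Req_dec z 0) as [|Hz]; auto. exfalso.
  pose proof (Rabs_pos_lt z Hz). pose proof (Rle_abs K).
  set (e := Rabs z / (2 * (Rabs K + 1))).
  assert (He : 0 < e) by (apply Rdiv_lt_0_compat; pose proof (Rabs_pos K); lra).
  assert (HeK : e * (Rabs K + 1) = Rabs z / 2) by (unfold e; field; pose proof (Rabs_pos K); lra).
  specialize (H e He). nra.
Qed.

Lemma deriv_within_unique (a b : R) (f d1 d2 : R -> R) : a < b ->
  deriv_within a b f d1 -> deriv_within a b f d2 -> forall x, a <= x <= b -> d1 x = d2 x.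
Proof.
  intros Hab H1 H2 x Hx. apply Rminus_diag_uniq, (eq0_of_Rabs_le_eps _ 2). intros e He.
  destruct (H1 x Hx e He) as [del1 [Hdel1 Hy1]].
  destruct (H2 x Hx e He) as [del2 [Hdel2 Hy2]].
  destruct (exists_near_point a b x (Rmin del1 del2)) as [y [Hy [Hyx Hyd]]]; auto.
  { apply Rmin_glb_lt; auto. }
  pose proof (Rmin_l del1 del2). pose proof (Rmin_r del1 del2).
  specialize (Hy1 y Hy ltac:(lra) Hyx). specialize (Hy2 y Hy ltac:(lra) Hyx).
  set (Q := (f y - f x) / (y - x)) in *.
  replace (d1 x - d2 x) with ((Q - d2 x) - (Q - d1 x)) by ring.
  eapply Rle_trans; [apply Rabs_triang|]. rewrite Rabs_Ropp. lra.
Qed.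

Lemma deriv_within_ge0 (a b : R) (f d : R -> R) (x : R) : a < b ->
  deriv_within a b f d -> a <= x <= b ->
  (forall y, a <= y <= b -> y <> x -> 0 <= (f y - f x) / (y - x)) -> 0 <= d x.
Proof.
  intros Hab Hd Hx Hq. destruct (Rle_or_lt 0 (d x)) as [|Hneg]; auto. exfalso.
  destruct (Hd x Hx (- d x) ltac:(lra)) as [del [Hdel Hy]].
  destruct (exists_near_point a b x del) as [y [Hy' [Hyx Hyd]]]; auto.
  specialize (Hy y Hy' Hyd Hyx). specialize (Hq y Hy' Hyx). apply Rabs_def2 in Hy. lra.
Qed.

Lemma deriv_on_I_lipschitz_at (f Df : R -> R) (x : R) : deriv_on_I f Df -> inI x ->
  exists del, 0 < del /\ forall y, inI y -> Rabs (y - x) < del ->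
    Rabs (f y - f x) <= (Rabs (Df x) + 1) * Rabs (y - x).
Proof.
  intros Hd Hx. destruct (Hd x Hx 1 ltac:(lra)) as [del [Hdel Hy]].
  exists del; split; auto. intros y Hy' Hyx.
  destruct (Req_dec y x) as [->|Hne].
  { rewrite !Rminus_diag, Rabs_R0. lra. }
  specialize (Hy y Hy' Hne Hyx).
  replace (f y - f x) with ((f y - f x) / (y - x) * (y - x)) by (field; lra).
  rewrite Rabs_mult. apply Rmult_le_compat_r; [apply Rabs_pos|].
  replace ((f y - f x) / (y - x)) with (((f y - f x) / (y - x) - Df x) + Df x) by ring.
  eapply Rle_trans; [apply Rabs_triang|]. lra.
Qed.

(* The difference quotients of f at x and of g at f x are reciprocal; pass to the limit. *)
Lemma deriv_inverse_mul (f g Df Dg : R -> R) (x : R) :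
  (forall s, inI s -> inI (f s) /\ g (f s) = s) ->
  deriv_on_I f Df -> deriv_on_I g Dg -> inI x -> Dg (f x) * Df x = 1.
Proof.
  intros Hfg Hf Hg Hx. set (A := Df x). set (B := Dg (f x)).
  apply Rminus_diag_uniq, (eq0_of_Rabs_le_eps _ (Rabs B + Rabs A + 1)). intros e He.
  assert (HA : 0 < Rabs A + 1) by (pose proof (Rabs_pos A); lra).
  destruct (deriv_on_I_lipschitz_at f Df x Hf Hx) as [del0 [Hdel0 Hlip]].
  destruct (Hf x Hx e He) as [delf [Hdelf Hqf]].
  destruct (Hfg x Hx) as [Hfx Hgfx].
  destruct (Hg (f x) Hfx e He) as [delg [Hdelg Hqg]].
  set (del := Rmin del0 (Rmin delf (delg / (Rabs A + 1)))).
  assert (Hdel : 0 < del).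
  { apply Rmin_glb_lt; auto. apply Rmin_glb_lt; auto. apply Rdiv_lt_0_compat; lra. }
  pose proof (Rmin_l del0 (Rmin delf (delg / (Rabs A + 1)))).
  pose proof (Rmin_l delf (delg / (Rabs A + 1))).
  pose proof (Rmin_r delf (delg / (Rabs A + 1))).
  pose proof (Rmin_r del0 (Rmin delf (delg / (Rabs A + 1)))).
  destruct (exists_near_point 0 1 x del ltac:(lra) Hx Hdel) as [y [Hy [Hyx Hyd]]].
  destruct (Hfg y Hy) as [Hfy Hgfy].
  assert (Hyx' : y - x <> 0) by lra.
  assert (Hfne : f y <> f x).
  { intros E. apply Hyx. rewrite <- Hgfy, <- Hgfx, E. reflexivity. }
  specialize (Hlip y Hy ltac:(unfold del in *; lra)). fold A in Hlip.
  specialize (Hqf y Hy Hyx ltac:(unfold del in *; lra)). fold A in Hqf.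
  assert (Hfd : Rabs (f y - f x) < delg).
  { eapply Rle_lt_trans; [apply Hlip|].
    apply Rlt_le_trans with ((Rabs A + 1) * (delg / (Rabs A + 1))).
    - apply Rmult_lt_compat_l; [lra|]. unfold del in *. lra.
    - right. field. lra. }
  specialize (Hqg (f y) Hfy Hfne Hfd). rewrite Hgfy, Hgfx in Hqg. fold B in Hqg.
  set (Qf := (f y - f x) / (y - x)) in *. set (Qg := (y - x) / (f y - f x)) in *.
  assert (HQf : Rabs Qf <= Rabs A + 1).
  { unfold Qf, Rdiv. rewrite Rabs_mult, Rabs_inv.
    apply Rmult_le_reg_r with (Rabs (y - x)); [apply Rabs_pos_lt; auto|].
    rewrite Rmult_assoc, Rinv_l, Rmult_1_r by (apply Rabs_no_R0; auto). exact Hlip. }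
  assert (HQ : Qg * Qf = 1) by (unfold Qg, Qf; field; split; lra).
  replace (B * A - 1) with (B * (A - Qf) + Qf * (B - Qg)) by (rewrite <- HQ; ring).
  eapply Rle_trans; [apply Rabs_triang|]. rewrite !Rabs_mult.
  rewrite (Rabs_minus_sym A), (Rabs_minus_sym B).
  pose proof (Rabs_pos B). pose proof (Rabs_pos Qf).
  assert (Rabs B * Rabs (Qf - A) <= Rabs B * e) by (apply Rmult_le_compat_l; lra).
  assert (Rabs Qf * Rabs (Qg - B) <= (Rabs A + 1) * e)
    by (apply Rmult_le_compat; try lra; apply Rabs_pos).
  lra.
Qed.

(** * Hoelder continuity *)

Lemma Rpower_ge0 (x y : R) : 0 <= Rpower x y.
Proof. unfold Rpower. apply Rlt_le, exp_pos. Qed.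

Definition holder_within (a b : R) (d : R -> R) (C delta : R) : Prop :=
  forall x y, a <= x <= b -> a <= y <= b -> Rabs (d x - d y) <= C * Rpower (Rabs (x - y)) delta.

(* The crossing case compares only positive distances: note [Rpower 0 delta = 1]. *)
Lemma holder_within_concat (a b c : R) (d : R -> R) (C1 C2 delta : R) :
  0 <= delta -> 0 <= C1 -> 0 <= C2 ->
  holder_within a b d C1 delta -> holder_within b c d C2 delta ->
  holder_within a c d (C1 + C2) delta.
Proof.
  intros Hdelta HC1 HC2 H1 H2.
  assert (Hle : forall x y, a <= x <= c -> a <= y <= c -> x <= y ->
    Rabs (d x - d y) <= (C1 + C2) * Rpower (Rabs (x - y)) delta).
  { intros x y Hx Hy Hxy.
    pose proof (Rpower_ge0 (Rabs (x - y)) delta) as HP.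
    destruct (Rle_or_lt y b) as [Hyb | Hby].
    { eapply Rle_trans; [apply H1; lra|]. nra. }
    destruct (Rle_or_lt b x) as [Hbx | Hxb].
    { eapply Rle_trans; [apply H2; lra|]. nra. }
    assert (Hxb' : Rpower (Rabs (x - b)) delta <= Rpower (Rabs (x - y)) delta).
    { apply Rle_Rpower_l; auto. rewrite !Rabs_left by lra. lra. }
    assert (Hby' : Rpower (Rabs (b - y)) delta <= Rpower (Rabs (x - y)) delta).
    { apply Rle_Rpower_l; auto. rewrite !Rabs_left by lra. lra. }
    replace (d x - d y) with ((d x - d b) + (d b - d y)) by ring.
    eapply Rle_trans; [apply Rabs_triang|].
    pose proof (H1 x b ltac:(lra) ltac:(lra)). pose proof (H2 b y ltac:(lra) ltac:(lra)).
    nra. }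
  intros x y Hx Hy. destruct (Rle_or_lt x y); [auto|].
  rewrite Rabs_minus_sym, (Rabs_minus_sym x). apply Hle; auto; lra.
Qed.

(** * Affine distortions *)

Definition aff_deriv (Dh : R -> R) (xl j yl k : R) (t : R) : R :=
  k / j * Dh ((t - xl) / j).

Lemma Rabs_mult_lt_scaled (c z eps : R) : 0 < eps ->
  Rabs z < eps / (Rabs c + 1) -> Rabs (c * z) < eps.
Proof.
  intros Heps Hz. pose proof (Rabs_pos c). pose proof (Rabs_pos z).
  assert (Hz' : Rabs z * (Rabs c + 1) < eps).
  { apply Rmult_lt_reg_r with (/ (Rabs c + 1)); [apply Rinv_0_lt_compat; lra|].
    rewrite Rmult_assoc, Rinv_r by lra. lra. }
  rewrite Rabs_mult. nra.
Qed.

Lemma aff_dist_deriv (h Dh : R -> R) (a a' b k : R) : a < a' -> deriv_on_I h Dh ->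
  deriv_within a a' (aff_dist h a (a' - a) b k) (aff_deriv Dh a (a' - a) b k).
Proof.
  intros Ha Hh. apply deriv_on_I_within in Hh.
  pose proof (near_within_affine a a' _ Ha Hh) as Hu. cbv beta in Hu.
  refine (near_within_impl_scaled a a' (Rabs (k / (a' - a)) + 1) _ _ _ _ Hu);
    [pose proof (Rabs_pos (k / (a' - a))); lra|].
  intros eps x y Heps _ _ HP Hyx. unfold aff_dist, aff_deriv.
  assert (Huyx : (y - a) / (a' - a) <> (x - a) / (a' - a)).
  { intros E. apply Hyx.
    replace y with (a + (a' - a) * ((y - a) / (a' - a))) by (field; lra).
    rewrite E. field. lra. }
  specialize (HP Huyx).
  apply Rabs_mult_lt_scaled in HP; auto.
  replace ((b + k * h ((y - a) / (a' - a)) - (b + k * h ((x - a) / (a' - a)))) / (y - x)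
           - k / (a' - a) * Dh ((x - a) / (a' - a)))
    with (k / (a' - a) *
          ((h ((y - a) / (a' - a)) - h ((x - a) / (a' - a)))
             / ((y - a) / (a' - a) - (x - a) / (a' - a)) - Dh ((x - a) / (a' - a)))).
  { exact HP. }
  field. split; lra.
Qed.

Lemma aff_deriv_cont (Dh : R -> R) (a a' b k : R) : a < a' -> cont_on_I Dh ->
  cont_within a a' (aff_deriv Dh a (a' - a) b k).
Proof.
  intros Ha Hh. apply cont_on_I_within in Hh.
  pose proof (near_within_affine a a' _ Ha Hh) as Hu. cbv beta in Hu.
  refine (near_within_impl_scaled a a' (Rabs (k / (a' - a)) + 1) _ _ _ _ Hu);
    [pose proof (Rabs_pos (k / (a' - a))); lra|].
  intros eps x y Heps _ _ HP. unfold aff_deriv.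
  rewrite <- Rmult_minus_distr_l. apply Rabs_mult_lt_scaled; auto.
Qed.

Lemma aff_deriv_holder (Dh : R -> R) (a a' b k C delta : R) : a < a' -> 0 <= C ->
  holder_within 0 1 Dh C delta ->
  holder_within a a' (aff_deriv Dh a (a' - a) b k)
    (Rabs (k / (a' - a)) * C * Rpower (/ (a' - a)) delta) delta.
Proof.
  intros Ha HC Hh x y Hx Hy. unfold aff_deriv.
  rewrite <- Rmult_minus_distr_l, Rabs_mult, !Rmult_assoc.
  apply Rmult_le_compat_l; [apply Rabs_pos|].
  destruct (Req_dec x y) as [->|Hxy].
  { rewrite Rminus_diag, Rabs_R0. apply Rmult_le_pos; auto.
    apply Rmult_le_pos; apply Rpower_ge0. }
  eapply Rle_trans; [apply Hh; apply affine_unit_interval; auto|].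
  rewrite Rabs_minus_sym, Rabs_affine_diff, Rabs_minus_sym by lra.
  unfold Rdiv. rewrite <- Rpower_mult_distr.
  - right. ring.
  - apply Rabs_pos_lt. lra.
  - apply Rinv_0_lt_compat. lra.
Qed.

Lemma aff_dist_left (h : R -> R) (a j b k : R) : h 0 = 0 -> aff_dist h a j b k a = b.
Proof. intros H0. unfold aff_dist. rewrite Rminus_diag, Rdiv_0_l, H0. ring. Qed.

Lemma aff_dist_right (h : R -> R) (a a' b b' : R) : a <> a' -> h 1 = 1 ->
  aff_dist h a (a' - a) b (b' - b) a' = b'.
Proof. intros Ha H1. unfold aff_dist. rewrite Rdiv_diag, H1 by lra. ring. Qed.

Lemma aff_deriv_left (Dh : R -> R) (a j b k : R) : aff_deriv Dh a j b k a = k / j * Dh 0.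
Proof. unfold aff_deriv. rewrite Rminus_diag, Rdiv_0_l. reflexivity. Qed.

Lemma aff_deriv_right (Dh : R -> R) (a a' b k : R) : a <> a' ->
  aff_deriv Dh a (a' - a) b k a' = k / (a' - a) * Dh 1.
Proof. intros Ha. unfold aff_deriv. rewrite Rdiv_diag by lra. reflexivity. Qed.

Lemma aff_dist_inverse (h g : R -> R) (a a' b b' : R) : a < a' -> b < b' ->
  (forall s, inI s -> inI (h s) /\ g (h s) = s) ->
  forall t, a <= t <= a' ->
    b <= aff_dist h a (a' - a) b (b' - b) t <= b' /\
    aff_dist g b (b' - b) a (a' - a) (aff_dist h a (a' - a) b (b' - b) t) = t.
Proof.
  intros Ha Hb Hhg t Ht. unfold aff_dist.
  destruct (Hhg _ (affine_unit_interval a a' t Ha Ht)) as [[Hh0 Hh1] Hgh].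
  split; [split; nra|].
  replace ((b + (b' - b) * h ((t - a) / (a' - a)) - b) / (b' - b))
    with (h ((t - a) / (a' - a))) by (field; lra).
  rewrite Hgh. field. lra.
Qed.

(** * Gluing along a partition *)

Definition increasing (n : nat) (p : nat -> R) : Prop :=
  forall i, (i < n)%nat -> p i < p (S i).

Record partition (n : nat) (p : nat -> R) : Prop := {
  partition_0 : p 0%nat = 0;
  partition_n : p n = 1;
  partition_incr : increasing n p }.

Lemma increasing_le (n : nat) (p : nat -> R) : increasing n p ->
  forall i j, (i <= j <= n)%nat -> p i <= p j.
Proof.
  intros Hp i j Hij. induction j as [|j IH].
  - replace i with 0%nat by lia. lra.
  - destruct (Nat.eq_dec i (S j)) as [->|Hne]; [lra|].
    pose proof (Hp j ltac:(lia)). specialize (IH ltac:(lia)). lra.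
Qed.

Lemma partition_unit (n : nat) (p : nat -> R) (i : nat) : partition n p -> (i <= n)%nat ->
  0 <= p i <= 1.
Proof.
  intros [H0 H1 Hp] Hi. rewrite <- H0, <- H1.
  split; apply (increasing_le n); auto; lia.
Qed.

Lemma ext_n (n : nat) (x : nat -> R) : (1 <= n)%nat -> ext n x n = 1.
Proof.
  intros Hn. unfold ext. destruct (Nat.eqb_spec n 0); [lia|]. rewrite Nat.eqb_refl. reflexivity.
Qed.

Lemma ext_interior (n : nat) (x : nat -> R) (i : nat) : i <> 0%nat -> i <> n -> ext n x i = x i.
Proof.
  intros H0 Hn. unfold ext. destruct (Nat.eqb_spec i 0), (Nat.eqb_spec i n); [lia..|reflexivity].
Qed.

Lemma inD_partition (n : nat) (x : nat -> R) : (1 <= n)%nat -> inD n x -> partition n (ext n x).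
Proof. intros Hn Hx. constructor; [reflexivity | apply ext_n; auto | exact Hx]. Qed.

Lemma interval_concat_ind (Q : R -> R -> Prop) (n : nat) (p : nat -> R) :
  (forall a b c, Q a b -> Q b c -> Q a c) -> (1 <= n)%nat ->
  (forall i, (i < n)%nat -> Q (p i) (p (S i))) -> Q (p 0%nat) (p n).
Proof.
  intros Hconcat Hn Hpieces. induction n as [|n IH]; [lia|].
  destruct (Nat.eq_dec n 0) as [->|Hn0]; [apply Hpieces; lia|].
  apply Hconcat with (p n); [apply IH; auto; lia | apply Hpieces; lia].
Qed.

Fixpoint glue (p : nat -> R) (G : nat -> R -> R) (n : nat) (t : R) : R :=
  match n with
  | O => G 0%nat t
  | S m => if Rle_dec t (p m) then glue p G m t else G m t
  end.

Definition agree_at_nodes (n : nat) (p : nat -> R) (G : nat -> R -> R) : Prop :=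
  forall i, (S i < n)%nat -> G i (p (S i)) = G (S i) (p (S i)).

Lemma glue_eq (n : nat) (p : nat -> R) (G : nat -> R -> R) (i : nat) (t : R) :
  increasing n p -> agree_at_nodes n p G -> (i < n)%nat -> p i <= t <= p (S i) ->
  glue p G n t = G i t.
Proof.
  revert i. induction n as [|m IH]; intros i Hp HG Hi Ht; [lia|]. simpl.
  assert (Hp' : increasing m p) by (intros j Hj; apply Hp; lia).
  assert (HG' : agree_at_nodes m p G) by (intros j Hj; apply HG; lia).
  destruct (Rle_dec t (p m)) as [Htm | Htm].
  - destruct (Nat.lt_ge_cases i m) as [Him | Him]; [apply IH; auto|].
    replace i with m in * by lia. replace t with (p m) in * by lra.
    destruct m as [|m]; [reflexivity|].
    rewrite (IH m); auto. split; [left; apply Hp; lia | lra].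

  - destruct (Nat.lt_ge_cases i m) as [Him | Him]; [|replace i with m by lia; reflexivity].
    exfalso. pose proof (increasing_le (S m) p Hp (S i) m ltac:(lia)). lra.
Qed.

Lemma glue_C1 (n : nat) (p : nat -> R) (G DG : nat -> R -> R) :
  (1 <= n)%nat -> partition n p -> agree_at_nodes n p G -> agree_at_nodes n p DG ->
  (forall i, (i < n)%nat ->
     deriv_within (p i) (p (S i)) (G i) (DG i) /\ cont_within (p i) (p (S i)) (DG i)) ->
  deriv_on_I (glue p G n) (glue p DG n) /\ cont_on_I (glue p DG n).
Proof.
  intros Hn Hp HG HDG Hpieces.
  assert (Heq : forall i t, (i < n)%nat -> p i <= t <= p (S i) ->
    glue p G n t = G i t /\ glue p DG n t = DG i t).
  { intros i t Hi Ht. split; apply glue_eq; auto; apply Hp. }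
  rewrite deriv_on_I_within, cont_on_I_within, <- (partition_0 n p), <- (partition_n n p) by auto.
  split.
  - apply (interval_concat_ind (fun a b => deriv_within a b _ _)); auto.
    { intros a b c. apply near_within_concat. }
    intros i Hi. refine (near_within_impl _ _ _ _ _ (proj1 (Hpieces i Hi))).
    intros eps x y Hx Hy.
    destruct (Heq i x Hi Hx) as [-> ->], (Heq i y Hi Hy) as [-> _]. auto.
  - apply (interval_concat_ind (fun a b => cont_within a b _)); auto.
    { intros a b c. apply near_within_concat. }
    intros i Hi. refine (near_within_impl _ _ _ _ _ (proj2 (Hpieces i Hi))).
    intros eps x y Hx Hy.
    destruct (Heq i x Hi Hx) as [_ ->], (Heq i y Hi Hy) as [_ ->]. auto.
Qed.

Lemma glue_holder (n : nat) (p : nat -> R) (DG : nat -> R -> R) (delta : R) :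
  0 <= delta -> (1 <= n)%nat -> partition n p -> agree_at_nodes n p DG ->
  (forall i, (i < n)%nat -> exists C, 0 <= C /\ holder_within (p i) (p (S i)) (DG i) C delta) ->
  exists C, 0 <= C /\ holder_within 0 1 (glue p DG n) C delta.
Proof.
  intros Hdelta Hn Hp HDG Hpieces.
  assert (Hall : exists C, 0 <= C /\ holder_within (p 0%nat) (p n) (glue p DG n) C delta).
  { apply (interval_concat_ind (fun a b => exists C, 0 <= C /\ holder_within a b _ C delta)); auto.
    - intros a b c [C1 [HC1 H1]] [C2 [HC2 H2]].
      exists (C1 + C2). split; [lra|]. apply holder_within_concat with b; auto.
    - intros i Hi. destruct (Hpieces i Hi) as [C [HC Hhol]]. exists C. split; auto.
      intros x y Hx Hy. rewrite !(glue_eq n p DG i) by (auto; apply Hp). auto. }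
  rewrite (partition_0 n p), (partition_n n p) in Hall by auto. exact Hall.
Qed.

Lemma glue_inverse (n : nat) (p q : nat -> R) (G H : nat -> R -> R) :
  (1 <= n)%nat -> partition n p -> partition n q ->
  agree_at_nodes n p G -> agree_at_nodes n q H ->
  (forall i t, (i < n)%nat -> p i <= t <= p (S i) ->
     q i <= G i t <= q (S i) /\ H i (G i t) = t) ->
  forall t, inI t -> inI (glue p G n t) /\ glue q H n (glue p G n t) = t.
Proof.
  intros Hn Hp Hq HG HH Hpieces.
  assert (Hall : forall t, p 0%nat <= t <= p n ->
    inI (glue p G n t) /\ glue q H n (glue p G n t) = t).
  { apply (interval_concat_ind (fun a b => forall t, a <= t <= b ->
      inI (glue p G n t) /\ glue q H n (glue p G n t) = t)); auto.
    - intros a b c Hab Hbc t Ht. destruct (Rle_or_lt t b); [apply Hab | apply Hbc]; lra.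
    - intros i Hi t Ht. destruct (Hpieces i t Hi Ht) as [Hv Hinv].
      pose proof (partition_unit n q i Hq ltac:(lia)).
      pose proof (partition_unit n q (S i) Hq ltac:(lia)).
      rewrite (glue_eq n p G i) by (auto; apply Hp).
      rewrite (glue_eq n q H i) by (auto; apply Hq). split; [unfold inI; lra | auto]. }
  intros t Ht. apply Hall. rewrite (partition_0 n p), (partition_n n p) by auto. exact Ht.
Qed.

Record diffeo_data (delta : R) (f Df g Dg : R -> R) (C : R) : Prop := {
  dd_f0 : f 0 = 0;
  dd_f1 : f 1 = 1;
  dd_deriv : deriv_on_I f Df;
  dd_deriv_cont : cont_on_I Df;
  dd_inv_l : forall s, inI s -> inI (f s) /\ g (f s) = s;
  dd_inv_r : forall s, inI s -> inI (g s) /\ f (g s) = s;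
  dd_inv_deriv : deriv_on_I g Dg;
  dd_inv_deriv_cont : cont_on_I Dg;
  dd_holder : holder_within 0 1 Df C delta;
  dd_C_ge0 : 0 <= C }.

Lemma E_delta_diffeo_data (delta : R) (f : R -> R) :
  E_delta delta f -> exists Df g Dg C, diffeo_data delta f Df g Dg C.
Proof.
  intros [[H0 [H1 [[Df [HDf HDfc]] [g [Hfg [Hgf [Dg [HDg HDgc]]]]]]]] [d [Hd [C HC]]]].
  exists Df, g, Dg, (Rmax C 0). constructor; auto; [|apply Rmax_r].
  assert (Hdd : forall x, inI x -> Df x = d x).
  { apply deriv_within_unique with (a := 0) (b := 1) (f := f); [lra| |];
      apply deriv_on_I_within; auto. }
  intros x y Hx Hy. rewrite !Hdd by auto.
  pose proof (Rpower_ge0 (Rabs (x - y)) delta).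
  destruct (Req_dec x y) as [->|Hxy].
  - rewrite Rminus_diag, Rabs_R0. apply Rmult_le_pos; auto. apply Rmax_r.
  - eapply Rle_trans; [apply HC; auto|]. apply Rmult_le_compat_r; auto. apply Rmax_l.
Qed.

Lemma diffeo_data_E_delta (delta : R) (f Df g Dg : R -> R) (C : R) :
  diffeo_data delta f Df g Dg C -> E_delta delta f.
Proof.
  intros [H0 H1 HDf HDfc Hfg Hgf HDg HDgc Hhol _].
  split.
  - split; [auto|]. split; [auto|]. split; [exists Df; auto|].
    exists g. split; [auto|]. split; [auto|]. exists Dg; auto.
  - exists Df. split; auto. exists C. intros x y Hx Hy _. apply Hhol; auto.
Qed.

Section DiffeoEnds.

Variables (delta : R) (f Df g Dg : R -> R) (C : R).
Hypothesis Hdata : diffeo_data delta f Df g Dg C.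

Let inI0 : inI 0. Proof. unfold inI; lra. Qed.
Let inI1 : inI 1. Proof. unfold inI; lra. Qed.

Lemma diffeo_inv0 : g 0 = 0.
Proof.
  destruct (dd_inv_l _ _ _ _ _ _ Hdata 0 inI0) as [_ E].
  rewrite (dd_f0 _ _ _ _ _ _ Hdata) in E. exact E.
Qed.

Lemma diffeo_inv1 : g 1 = 1.
Proof.
  destruct (dd_inv_l _ _ _ _ _ _ Hdata 1 inI1) as [_ E].
  rewrite (dd_f1 _ _ _ _ _ _ Hdata) in E. exact E.
Qed.

Lemma diffeo_deriv_inv0 : Dg 0 * Df 0 = 1.
Proof.
  rewrite <- (dd_f0 _ _ _ _ _ _ Hdata) at 1.
  apply deriv_inverse_mul with g; auto; apply Hdata.
Qed.

Lemma diffeo_deriv_inv1 : Dg 1 * Df 1 = 1.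
Proof.
  rewrite <- (dd_f1 _ _ _ _ _ _ Hdata) at 1.
  apply deriv_inverse_mul with g; auto; apply Hdata.
Qed.

Lemma diffeo_deriv_pos0 : 0 < Df 0.
Proof.
  assert (Hge : 0 <= Df 0).
  { apply deriv_within_ge0 with (a := 0) (b := 1) (f := f); [lra| |lra|].
    - apply deriv_on_I_within, Hdata.
    - intros y Hy Hy0. rewrite (dd_f0 _ _ _ _ _ _ Hdata), !Rminus_0_r.
      destruct (dd_inv_l _ _ _ _ _ _ Hdata y Hy) as [[Hfy _] _].
      apply Rmult_le_pos; [lra|]. apply Rlt_le, Rinv_0_lt_compat. lra. }
  destruct Hge as [|E]; auto. pose proof diffeo_deriv_inv0 as Hinv.
  rewrite <- E, Rmult_0_r in Hinv. lra.
Qed.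

Lemma diffeo_deriv_pos1 : 0 < Df 1.
Proof.
  assert (Hge : 0 <= Df 1).
  { apply deriv_within_ge0 with (a := 0) (b := 1) (f := f); [lra| |lra|].
    - apply deriv_on_I_within, Hdata.
    - intros y Hy Hy1. rewrite (dd_f1 _ _ _ _ _ _ Hdata).
      destruct (dd_inv_l _ _ _ _ _ _ Hdata y Hy) as [[_ Hfy] _].
      replace ((f y - 1) / (y - 1)) with ((1 - f y) / (1 - y)) by (field; lra).
      apply Rmult_le_pos; [lra|]. apply Rlt_le, Rinv_0_lt_compat. destruct Hy. lra. }
  destruct Hge as [|E]; auto. pose proof diffeo_deriv_inv1 as Hinv.
  rewrite <- E, Rmult_0_r in Hinv. lra.
Qed.

End DiffeoEnds.

Lemma E_delta_family_data (delta : R) (n : nat) (phi : nat -> R -> R) :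
  (forall i, (1 <= i <= n)%nat -> E_delta delta (phi i)) ->
  exists D g Dg C, forall i, (i < n)%nat ->
    diffeo_data delta (phi (S i)) (D (S i)) (g (S i)) (Dg (S i)) (C (S i)).
Proof.
  intros Hphi.
  destruct (functional_choice (fun i (w : (R -> R) * (R -> R) * (R -> R) * R) =>
    (1 <= i <= n)%nat -> diffeo_data delta (phi i) (fst (fst (fst w))) (snd (fst (fst w)))
                                          (snd (fst w)) (snd w))) as [w Hw].
  { intros i. destruct (le_lt_dec 1 i); [destruct (le_lt_dec i n)|].
    - destruct (E_delta_diffeo_data delta (phi i) (Hphi i ltac:(lia))) as (Df & g & Dg & C & H).
      exists (Df, g, Dg, C). auto.
    - exists (id, id, id, 0). lia.
    - exists (id, id, id, 0). lia. }
  exists (fun i => fst (fst (fst (w i)))), (fun i => snd (fst (fst (w i)))),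
    (fun i => snd (fst (w i))), (fun i => snd (w i)).
  intros i Hi. apply Hw. lia.
Qed.

(* The index shift [h (S i)] matches the numbering [phi_1, ..., phi_n] of the statement. *)
(** * Gluing affine copies of the phi_i *)

Definition piece (h : nat -> R -> R) (p q : nat -> R) (i : nat) : R -> R :=
  aff_dist (h (S i)) (p i) (p (S i) - p i) (q i) (q (S i) - q i).

Definition dpiece (Dh : nat -> R -> R) (p q : nat -> R) (i : nat) : R -> R :=
  aff_deriv (Dh (S i)) (p i) (p (S i) - p i) (q i) (q (S i) - q i).

Lemma glues_piecewise (n : nat) (phi : nat -> R -> R) (x y : nat -> R) (F : R -> R) :
  glues n phi x y F <-> forall i t, (i < n)%nat -> ext n x i <= t <= ext n x (S i) ->
    F t = piece phi (ext n x) (ext n y) i t.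
Proof.
  split.
  - intros H i t Hi Ht. specialize (H (S i) ltac:(lia) t).
    rewrite Nat.sub_succ, Nat.sub_0_r in H. exact (H Ht).
  - intros H [|i] Hi t Ht; [lia|]. rewrite Nat.sub_succ, Nat.sub_0_r in *. apply H; auto. lia.
Qed.

Definition fixes_ends (n : nat) (h : nat -> R -> R) : Prop :=
  forall i, (i < n)%nat -> h (S i) 0 = 0 /\ h (S i) 1 = 1.

Lemma pieces_agree (n : nat) (h : nat -> R -> R) (p q : nat -> R) :
  increasing n p -> fixes_ends n h -> agree_at_nodes n p (piece h p q).
Proof.
  intros Hp Hh i Hi. pose proof (Hp i ltac:(lia)). unfold piece.
  rewrite aff_dist_right, aff_dist_left; auto; [apply Hh | lra | apply Hh]; lia.
Qed.

Lemma glue_pieces_ends (n : nat) (h : nat -> R -> R) (p q : nat -> R) :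
  (1 <= n)%nat -> increasing n p -> fixes_ends n h ->
  glue p (piece h p q) n (p 0%nat) = q 0%nat /\ glue p (piece h p q) n (p n) = q n.
Proof.
  intros Hn Hp Hh. pose proof (pieces_agree n h p q Hp Hh). split.
  - pose proof (Hp 0%nat ltac:(lia)).
    rewrite (glue_eq n p _ 0); auto; [|lra].
    apply aff_dist_left, Hh. lia.
  - destruct n as [|m]; [lia|]. pose proof (Hp m ltac:(lia)).
    rewrite (glue_eq _ p _ m); auto; [|lra].
    apply aff_dist_right; [lra | apply Hh; lia].
Qed.

Lemma glue_pieces_C1 (n : nat) (h Dh : nat -> R -> R) (p q : nat -> R) :
  (1 <= n)%nat -> partition n p -> fixes_ends n h ->
  (forall i, (i < n)%nat -> deriv_on_I (h (S i)) (Dh (S i)) /\ cont_on_I (Dh (S i))) ->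
  agree_at_nodes n p (dpiece Dh p q) ->
  deriv_on_I (glue p (piece h p q) n) (glue p (dpiece Dh p q) n) /\
  cont_on_I (glue p (dpiece Dh p q) n).
Proof.
  intros Hn Hp Hh HDh Hslopes. apply glue_C1; auto.
  - apply pieces_agree; auto. apply Hp.
  - intros i Hi. pose proof (partition_incr n p Hp i Hi). split.
    + apply aff_dist_deriv; [lra | apply HDh; auto].
    + apply aff_deriv_cont; [lra | apply HDh; auto].
Qed.

Lemma glue_pieces_inverse (n : nat) (h g : nat -> R -> R) (p q : nat -> R) :
  (1 <= n)%nat -> partition n p -> partition n q -> fixes_ends n h -> fixes_ends n g ->
  (forall i, (i < n)%nat -> forall s, inI s -> inI (h (S i) s) /\ g (S i) (h (S i) s) = s) ->
  forall t, inI t ->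
    inI (glue p (piece h p q) n t) /\ glue q (piece g q p) n (glue p (piece h p q) n t) = t.
Proof.
  intros Hn Hp Hq Hh Hg Hhg. apply glue_inverse; auto.
  - apply pieces_agree; auto. apply Hp.
  - apply pieces_agree; auto. apply Hq.
  - intros i t Hi Ht. apply aff_dist_inverse; auto; [apply Hp | apply Hq]; auto.
Qed.

Lemma glue_pieces_holder (n : nat) (Dh : nat -> R -> R) (p q : nat -> R) (C : nat -> R) (delta : R) :
  0 <= delta -> (1 <= n)%nat -> partition n p -> agree_at_nodes n p (dpiece Dh p q) ->
  (forall i, (i < n)%nat -> 0 <= C (S i) /\ holder_within 0 1 (Dh (S i)) (C (S i)) delta) ->
  exists K, 0 <= K /\ holder_within 0 1 (glue p (dpiece Dh p q) n) K delta.
Proof.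
  intros Hdelta Hn Hp Hslopes HC. apply glue_holder; auto.
  intros i Hi. pose proof (partition_incr n p Hp i Hi). destruct (HC i Hi) as [HC0 Hhol].
  eexists. split; [|apply aff_deriv_holder with (C := C (S i)); auto; lra].
  apply Rmult_le_pos; [apply Rmult_le_pos; [apply Rabs_pos | auto] | apply Rpower_ge0].
Qed.

Lemma reciprocal_slopes_eq (j1 k1 j2 k2 A B G1 G2 : R) :
  j1 <> 0 -> k1 <> 0 -> j2 <> 0 -> k2 <> 0 -> G1 * A = 1 -> G2 * B = 1 ->
  k1 / j1 * A = k2 / j2 * B -> j1 / k1 * G1 = j2 / k2 * G2.
Proof.
  intros Hj1 Hk1 Hj2 Hk2 HA HB E.
  assert (A <> 0) by (intros ->; lra). assert (B <> 0) by (intros ->; lra).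
  replace G1 with (/ A) by (apply (Rmult_eq_reg_r A); auto; rewrite Rinv_l; auto).
  replace G2 with (/ B) by (apply (Rmult_eq_reg_r B); auto; rewrite Rinv_l; auto).
  replace (j1 / k1 * / A) with (/ (k1 / j1 * A)) by (field; auto).
  replace (j2 / k2 * / B) with (/ (k2 / j2 * B)) by (field; auto).
  rewrite E. reflexivity.
Qed.

Lemma inverse_slopes_agree (n : nat) (p q : nat -> R) (D Dg : nat -> R -> R) :
  increasing n p -> increasing n q ->
  (forall i, (i < n)%nat -> Dg (S i) 0 * D (S i) 0 = 1 /\ Dg (S i) 1 * D (S i) 1 = 1) ->
  agree_at_nodes n p (dpiece D p q) -> agree_at_nodes n q (dpiece Dg q p).
Proof.
  intros Hp Hq Hinv Hslopes i Hi. specialize (Hslopes i Hi). unfold dpiece in *.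
  pose proof (Hp i ltac:(lia)). pose proof (Hp (S i) Hi).
  pose proof (Hq i ltac:(lia)). pose proof (Hq (S i) Hi).
  rewrite aff_deriv_right, aff_deriv_left in * by lra.
  apply reciprocal_slopes_eq with (D (S i) 1) (D (S (S i)) 0); try lra.
  - apply (Hinv i). lia.
  - apply (Hinv (S i) Hi).
Qed.

Lemma glue_E_delta (delta : R) (n : nat) (p q : nat -> R) (h Dh g Dg : nat -> R -> R)
    (C : nat -> R) :
  0 <= delta -> (1 <= n)%nat -> partition n p -> partition n q ->
  (forall i, (i < n)%nat -> diffeo_data delta (h (S i)) (Dh (S i)) (g (S i)) (Dg (S i)) (C (S i))) ->
  agree_at_nodes n p (dpiece Dh p q) ->
  E_delta delta (glue p (piece h p q) n).
Proof.
  intros Hdelta Hn Hp Hq Hdata Hslopes.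
  assert (Hh : fixes_ends n h) by (intros i Hi; split; apply (Hdata i Hi)).
  assert (Hg : fixes_ends n g).
  { intros i Hi. split; [eapply diffeo_inv0 | eapply diffeo_inv1]; apply (Hdata i Hi). }
  assert (HDg : agree_at_nodes n q (dpiece Dg q p)).
  { apply (inverse_slopes_agree n p q Dh); auto; [apply Hp | apply Hq |]. intros i Hi.
    split; [eapply diffeo_deriv_inv0 | eapply diffeo_deriv_inv1]; apply (Hdata i Hi). }
  destruct (glue_pieces_C1 n h Dh p q) as [HdF HcF]; auto; [intros i Hi; split; apply (Hdata i Hi)|].
  destruct (glue_pieces_C1 n g Dg q p) as [HdG HcG]; auto; [intros i Hi; split; apply (Hdata i Hi)|].
  destruct (glue_pieces_holder n Dh p q C delta) as [K [HK Hhol]]; auto.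
  { intros i Hi. split; apply (Hdata i Hi). }
  destruct (glue_pieces_ends n h p q) as [H0 H1]; auto; [apply Hp|].
  rewrite (partition_0 n p Hp), (partition_0 n q Hq) in H0.
  rewrite (partition_n n p Hp), (partition_n n q Hq) in H1.
  apply diffeo_data_E_delta with (glue p (dpiece Dh p q) n) (glue q (piece g q p) n)
    (glue q (dpiece Dg q p) n) K.
  constructor; auto; apply glue_pieces_inverse; auto; intros i Hi; apply (Hdata i Hi).
Qed.

Lemma glued_slopes_agree (n : nat) (p q : nat -> R) (h Dh : nat -> R -> R) (F dF : R -> R) :
  partition n p -> (forall i, (i < n)%nat -> deriv_on_I (h (S i)) (Dh (S i))) ->
  deriv_on_I F dF ->
  (forall i t, (i < n)%nat -> p i <= t <= p (S i) -> F t = piece h p q i t) ->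
  agree_at_nodes n p (dpiece Dh p q).
Proof.
  intros Hp Hh HF Hglue.
  assert (HdF : forall i t, (i < n)%nat -> p i <= t <= p (S i) -> dF t = dpiece Dh p q i t).
  { intros i t Hi Ht. pose proof (partition_incr n p Hp i Hi) as Hlen.
    pose proof (partition_unit n p i Hp ltac:(lia)).
    pose proof (partition_unit n p (S i) Hp Hi).
    apply deriv_within_unique with (p i) (p (S i)) F; auto.
    - apply near_within_sub with 0 1; try lra. apply deriv_on_I_within. exact HF.
    - refine (near_within_impl _ _ _ _ _
        (aff_dist_deriv (h (S i)) (Dh (S i)) (p i) (p (S i)) (q i) (q (S i) - q i) Hlen (Hh i Hi))).
      intros eps x y Hx Hy. rewrite !(Hglue i) by auto. auto. }
  intros i Hi.
  pose proof (partition_incr n p Hp i ltac:(lia)). pose proof (partition_incr n p Hp (S i) Hi).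
  rewrite <- (HdF i), <- (HdF (S i)); auto; (lia || lra).
Qed.

(** * Solving the matching condition *)

Definition lengths_follow (n : nat) (p c : nat -> R) : Prop :=
  forall i, (S i < n)%nat -> p (S (S i)) - p (S i) = c i * (p (S i) - p i).

(* For a sequence following [c], [rel_len c i] and [rel_node c m] are the length
   [p (S i) - p i] and the node [p m] in units of the first length [p 1 - p 0]. *)
Fixpoint rel_len (c : nat -> R) (i : nat) : R :=
  match i with O => 1 | S i' => rel_len c i' * c i' end.

Fixpoint rel_node (c : nat -> R) (m : nat) : R :=
  match m with O => 0 | S m' => rel_node c m' + rel_len c m' end.

Definition nodes (c : nat -> R) (n m : nat) : R := rel_node c m / rel_node c n.

Lemma lengths_follow_rel_len (n : nat) (p c : nat -> R) : lengths_follow n p c ->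
  forall i, (S i <= n)%nat -> p (S i) - p i = rel_len c i * (p 1%nat - p 0%nat).
Proof.
  intros Hc i. induction i as [|i IH]; intros Hi; simpl; [ring|].
  rewrite Hc, IH by lia. ring.
Qed.

Lemma lengths_follow_nodes (n : nat) (p c : nat -> R) : partition n p -> lengths_follow n p c ->
  forall m, (m <= n)%nat -> p m = nodes c n m.
Proof.
  intros Hp Hc.
  assert (Hrel : forall m, (m <= n)%nat -> p m = rel_node c m * p 1%nat).
  { induction m as [|m IH]; intros Hm; simpl; [rewrite (partition_0 n p Hp); ring|].
    replace (p (S m)) with (p m + (p (S m) - p m)) by ring.
    rewrite (lengths_follow_rel_len n p c Hc m), IH, (partition_0 n p Hp) by lia. ring. }
  assert (Hnorm : rel_node c n * p 1%nat = 1) by (rewrite <- Hrel, (partition_n n p Hp); lia || auto).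
  assert (Hn0 : rel_node c n <> 0) by (intros E; rewrite E in Hnorm; lra).
  intros m Hm. unfold nodes. rewrite Hrel by auto.
  replace (p 1%nat) with (/ rel_node c n); [reflexivity|].
  apply (Rmult_eq_reg_l (rel_node c n)); auto. rewrite Hnorm. field. auto.
Qed.

Lemma rel_len_pos (n : nat) (c : nat -> R) : (forall i, (S i < n)%nat -> 0 < c i) ->
  forall i, (i < n)%nat -> 0 < rel_len c i.
Proof.
  intros Hc i. induction i as [|i IH]; intros Hi; simpl; [lra|].
  apply Rmult_lt_0_compat; [apply IH | apply Hc]; lia.
Qed.

Lemma nodes_partition (n : nat) (c : nat -> R) : (1 <= n)%nat ->
  (forall i, (S i < n)%nat -> 0 < c i) ->
  partition n (ext n (nodes c n)) /\ lengths_follow n (ext n (nodes c n)) c.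
Proof.
  intros Hn Hc. pose proof (rel_len_pos n c Hc) as Hlen.
  assert (Hincr : increasing n (rel_node c)) by (intros i Hi; simpl; pose proof (Hlen i Hi); lra).
  assert (Hpos : 0 < rel_node c n).
  { destruct n as [|m]; [lia|]. simpl.
    pose proof (increasing_le (S m) _ Hincr 0 m ltac:(lia)). pose proof (Hlen m ltac:(lia)).
    simpl in *. lra. }
  assert (Hext : forall m, (m <= n)%nat -> ext n (nodes c n) m = nodes c n m).
  { intros m Hm. unfold nodes.
    destruct (Nat.eq_dec m 0) as [->|Hm0]; [unfold ext; simpl; unfold Rdiv; ring|].
    destruct (Nat.eq_dec m n) as [->|Hmn]; [rewrite ext_n, Rdiv_diag by (lia || lra); reflexivity|].
    apply ext_interior; auto. }
  split.
  - apply inD_partition; auto. intros i Hi.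
    rewrite !Hext by lia. unfold nodes, Rdiv.
    apply Rmult_lt_compat_r; [apply Rinv_0_lt_compat | apply Hincr]; auto.
  - intros i Hi. rewrite !Hext by lia. unfold nodes. simpl. field. lra.
Qed.

Definition length_ratio (D : nat -> R -> R) (q : nat -> R) (i : nat) : R :=
  (q (S (S i)) - q (S i)) * D (S (S i)) 0 / ((q (S i) - q i) * D (S i) 1).

Lemma length_ratio_pos (n : nat) (q : nat -> R) (D : nat -> R -> R) : increasing n q ->
  (forall i, (i < n)%nat -> 0 < D (S i) 0 /\ 0 < D (S i) 1) ->
  forall i, (S i < n)%nat -> 0 < length_ratio D q i.
Proof.
  intros Hq HD i Hi. pose proof (Hq i ltac:(lia)). pose proof (Hq (S i) Hi).
  destruct (HD i ltac:(lia)) as [_ HD1]. destruct (HD (S i) Hi) as [HD0 _].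
  unfold length_ratio. apply Rdiv_lt_0_compat; apply Rmult_lt_0_compat; lra.
Qed.

Lemma slope_eq_iff_length_eq (j1 k1 j2 k2 A B : R) :
  j1 <> 0 -> k1 <> 0 -> j2 <> 0 -> k2 <> 0 -> A <> 0 -> B <> 0 ->
  k1 / j1 * A = k2 / j2 * B <-> j2 = k2 * B / (k1 * A) * j1.
Proof.
  intros Hj1 Hk1 Hj2 Hk2 HA HB.
  assert (Hcross : k1 / j1 * A = k2 / j2 * B <-> k1 * A * j2 = k2 * B * j1).
  { split; intros E.
    - replace (k1 * A * j2) with (k1 / j1 * A * (j1 * j2)) by (field; auto).
      rewrite E. field. auto.
    - apply (Rmult_eq_reg_r (j1 * j2)); [|apply Rmult_integral_contrapositive; auto].
      replace (k1 / j1 * A * (j1 * j2)) with (k1 * A * j2) by (field; auto).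
      rewrite E. field. auto. }
  rewrite Hcross. split; intros E.
  - apply (Rmult_eq_reg_l (k1 * A)); [|apply Rmult_integral_contrapositive; auto].
    rewrite E. field. auto.
  - rewrite E. field. auto.
Qed.

Lemma slopes_agree_iff_lengths_follow (n : nat) (p q : nat -> R) (D : nat -> R -> R) :
  increasing n p -> increasing n q ->
  (forall i, (i < n)%nat -> 0 < D (S i) 0 /\ 0 < D (S i) 1) ->
  agree_at_nodes n p (dpiece D p q) <-> lengths_follow n p (length_ratio D q).
Proof.
  intros Hp Hq HD.
  assert (Hnode : forall i, (S i < n)%nat ->
    dpiece D p q i (p (S i)) = dpiece D p q (S i) (p (S i)) <->
    p (S (S i)) - p (S i) = length_ratio D q i * (p (S i) - p i)).
  { intros i Hi. unfold dpiece, length_ratio.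
    pose proof (Hp i ltac:(lia)). pose proof (Hp (S i) Hi).
    pose proof (Hq i ltac:(lia)). pose proof (Hq (S i) Hi).
    destruct (HD i ltac:(lia)) as [_ HD1]. destruct (HD (S i) Hi) as [HD0 _].
    rewrite aff_deriv_right, aff_deriv_left by lra.
    apply slope_eq_iff_length_eq; lra. }
  split; intros H i Hi; apply Hnode; auto.
Qed.

Theorem mainTheorem20 (delta : R) (n : nat) (y : nat -> R) (phi : nat -> R -> R) :
  0 < delta < 1 / 2 ->
  (1 <= n)%nat ->
  inD n y ->
  (forall i, (1 <= i <= n)%nat -> E_delta delta (phi i)) ->
  exists x : nat -> R,
    (inD n x /\ exists phibar, E_delta delta phibar /\ glues n phi x y phibar) /\
    (forall x' : nat -> R,
       inD n x' -> (exists phibar, E_delta delta phibar /\ glues n phi x' y phibar) ->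
       forall i, (1 <= i <= n - 1)%nat -> x' i = x i).
Proof.
  intros [Hdelta _] Hn Hy Hphi.
  destruct (E_delta_family_data delta n phi Hphi) as (D & g & Dg & C & Hdata).
  pose proof (inD_partition n y Hn Hy) as Hq.
  assert (HD : forall i, (i < n)%nat -> 0 < D (S i) 0 /\ 0 < D (S i) 1).
  { intros i Hi. split; [eapply diffeo_deriv_pos0 | eapply diffeo_deriv_pos1]; apply Hdata, Hi. }
  set (c := length_ratio D (ext n y)).
  destruct (nodes_partition n c Hn (length_ratio_pos n _ D Hy HD)) as [Hp Hlen].
  assert (Hslopes : forall x, partition n (ext n x) ->
    agree_at_nodes n (ext n x) (dpiece D (ext n x) (ext n y)) <-> lengths_follow n (ext n x) c).
  { intros x Hx. apply slopes_agree_iff_lengths_follow; auto; apply partition_incr; auto. }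
  exists (nodes c n). split.
  - split; [apply Hp|].
    exists (glue (ext n (nodes c n)) (piece phi (ext n (nodes c n)) (ext n y)) n). split.
    + apply glue_E_delta with D g Dg C; auto; [lra | apply Hslopes; auto].
    + apply glues_piecewise. intros i t Hi Ht. apply glue_eq; auto; [apply Hp|].
      apply pieces_agree; [apply Hp|]. intros j Hj. split; apply (Hdata j Hj).
  - intros x' Hx' [F [[_ [dF [HdF _]]] Hglue]] i Hi.
    pose proof (inD_partition n x' Hn Hx') as Hp'.
    assert (Hlen' : lengths_follow n (ext n x') c).
    { apply Hslopes, (glued_slopes_agree n _ _ phi D F dF); auto.
      - intros j Hj. apply (Hdata j Hj).
      - apply glues_piecewise. exact Hglue. }
    rewrite <- (ext_interior n x' i), <- (ext_interior n (nodes c n) i) by lia.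
    rewrite (lengths_follow_nodes n _ c Hp' Hlen'), (lengths_follow_nodes n _ c Hp Hlen) by lia.
    reflexivity.
Qed.
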